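(* Let $R$ be a commutative ring with identity. Then the cozero-divisor graph $\Gamma'(R)$ is planar if and only if $\Gamma''_I(R)$ is planar for every ideal $I$ of $R$.
   Context: $\Gamma'(R)$ is the simple undirected graph whose vertices are the nonzero non-unit elements of $R$, with distinct vertices $x,y$ adjacent if and only if $x\notin yR$ and $y\notin xR$. For an ideal $I$ of $R$, $\Gamma''_I(R)$ is the simple undirected graph whose vertex set is $\{x\in R\setminus I : xR+I\neq R\}$, with distinct vertices $x,y$ adjacent if and only if $x\notin yR+I$ and $y\notin xR+I$. A graph is planar if it can be drawn in the plane with edges meeting only at their endpoints. *)

From Stdlib Require Import Rdefinitions Raxioms RIneq Rbasic_fun.
From HB Require Import structures.
From mathcomp Require Import all_boot all_algebra.

Set Implicit Arguments.
Unset Strict Implicit.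
Unset Printing Implicit Defensive.

Import GRing.Theory.

Definition point := (Rdefinitions.R * Rdefinitions.R)%type.

Definition pdist (p q : point) : Rdefinitions.R :=
  Rmax (Rabs (Rminus (fst p) (fst q))) (Rabs (Rminus (snd p) (snd q))).

Definition in01 (t : Rdefinitions.R) : Prop := Rle R0 t /\ Rle t R1.
Definition in01o (t : Rdefinitions.R) : Prop := Rlt R0 t /\ Rlt t R1.

Definition cont01 (g : Rdefinitions.R -> point) : Prop :=
  forall t, in01 t -> forall eps, Rlt R0 eps ->
    exists delta, Rlt R0 delta /\
      forall s, in01 s -> Rlt (Rabs (Rminus s t)) delta ->
        Rlt (pdist (g s) (g t)) eps.

Definition arc (g : Rdefinitions.R -> point) : Prop :=
  cont01 g /\ (forall s t, in01 s -> in01 t -> g s = g t -> s = t).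

(* A graph on vertex type V with symmetric irreflexive adjacency adj is
   planar if there is an injective placement of the vertices and, for
   each edge {x,y}, an arc from x to y, such that the interior of an arc
   contains no vertex, and the interiors of arcs of distinct edges are
   disjoint.  (edge x y is the arc chosen for the ordered pair; for the
   same unordered edge we may use either orientation.) *)
Definition planar (V : Type) (adj : V -> V -> Prop) : Prop :=
  exists (pos : V -> point) (edge : V -> V -> Rdefinitions.R -> point),
    (forall x y, pos x = pos y -> x = y) /\
    (forall x y, adj x y ->
       arc (edge x y) /\ edge x y R0 = pos x /\ edge x y R1 = pos y /\
       (forall t z, in01o t -> edge x y t <> pos z)) /\
    (forall x y u v, adj x y -> adj u v ->
       ~ ((x = u /\ y = v) \/ (x = v /\ y = u)) ->
       forall s t, in01o s -> in01o t -> edge x y s <> edge u v t).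

Local Open Scope ring_scope.

Definition is_ideal (R : comPzRingType) (I : R -> Prop) : Prop :=
  I 0 /\ (forall x y, I x -> I y -> I (x - y)) /\
  (forall r x, I x -> I (r * x)).

Definition is_unit (R : comPzRingType) (x : R) : Prop := exists y, x * y = 1.

Definition in_principal (R : comPzRingType) (x y : R) : Prop :=
  exists r, x = y * r.

Definition in_principal_plus (R : comPzRingType) (I : R -> Prop) (z x : R)
  : Prop := exists r i, I i /\ z = x * r + i.

Definition cozero_vertex (R : comPzRingType) (x : R) : Prop :=
  x <> 0 /\ ~ is_unit x.

Definition cozero_graph (R : comPzRingType) : Type :=
  {x : R | cozero_vertex x}.

Definition cozero_adj (R : comPzRingType) (x y : cozero_graph R) : Prop :=
  x <> y /\ ~ in_principal (proj1_sig x) (proj1_sig y) /\ ~ in_principal (proj1_sig y) (proj1_sig x).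

(* Gamma''_I(R): vertices x in R \ I with xR + I <> R *)
Definition cozeroI_vertex (R : comPzRingType) (I : R -> Prop) (x : R) : Prop :=
  ~ I x /\ ~ (forall z : R, in_principal_plus I z x).

Definition cozeroI_graph (R : comPzRingType) (I : R -> Prop) : Type :=
  {x : R | cozeroI_vertex I x}.

Definition cozeroI_adj (R : comPzRingType) (I : R -> Prop)
  (x y : cozeroI_graph I) : Prop :=
  x <> y /\ ~ in_principal_plus I (proj1_sig x) (proj1_sig y) /\
  ~ in_principal_plus I (proj1_sig y) (proj1_sig x).

(** Adjacency in [Gamma''_I(R)] is the adjacency of [Gamma'(R)] with each
    principal ideal enlarged by [I], so it implies adjacency in [Gamma'(R)];
    hence [Gamma''_I(R)] is a subgraph of [Gamma'(R)] on a subset of its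
    vertices, and planarity passes to subgraphs.  Conversely
    [Gamma''_0(R) = Gamma'(R)]. *)
From mathcomp Require Import all_boot all_algebra.
From Stdlib Require Import ProofIrrelevance.

Set Implicit Arguments.
Unset Strict Implicit.
Unset Printing Implicit Defensive.

Import GRing.Theory.
Local Open Scope ring_scope.

Lemma planar_inj_hom (V W : Type) (adjV : V -> V -> Prop) (adjW : W -> W -> Prop)
    (f : V -> W) :
  injective f -> (forall x y, adjV x y -> adjW (f x) (f y)) ->
  planar adjW -> planar adjV.
Proof.
move=> f_inj f_hom [pos [edge [pos_inj [edge_arc edge_disj]]]].
exists (pos \o f), (fun x y => edge (f x) (f y)); split; last split.
- by move=> x y /pos_inj /f_inj.
- move=> x y /f_hom /edge_arc [arc_xy [start [stop avoid]]].
  split; [|split; [|split]] => // t z t01; exact: avoid.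
- move=> x y u v /f_hom adj_xy /f_hom adj_uv other s t s01 t01.
  apply: (edge_disj _ _ _ _ adj_xy adj_uv) => //.
  by case=> -[/f_inj xu /f_inj yv]; apply: other; [left|right].
Qed.

Section WidenSig.

Variables (A : Type) (P Q : A -> Prop).
Hypothesis subPQ : forall x, P x -> Q x.

Definition widen_sig (x : {x | P x}) : {x | Q x} :=
  exist Q (proj1_sig x) (subPQ (proj2_sig x)).

Lemma widen_sig_inj : injective widen_sig.
Proof.
move=> [x Px] [y Py] /(f_equal (@proj1_sig _ _)) /= eq_xy.
exact: subset_eq_compat.
Qed.

End WidenSig.

Section CozeroGraphs.

Variable R : comPzRingType.

Definition zero_ideal (x : R) : Prop := x = 0.

Lemma is_ideal_zero : is_ideal zero_ideal.
Proof.
rewrite /zero_ideal; do ![split] => [x y -> ->|r x ->]; first exact: subr0.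
exact: mulr0.
Qed.

Lemma in_principal_plusW (I : R -> Prop) (z x : R) :
  I 0 -> in_principal z x -> in_principal_plus I z x.
Proof. by move=> I0 [r ->]; exists r, 0; rewrite addr0. Qed.

Lemma in_principal_plus0 (z x : R) :
  in_principal_plus zero_ideal z x -> in_principal z x.
Proof. by move=> [r [i [-> ->]]]; exists r; rewrite addr0. Qed.

Lemma cozeroI_vertex_cozero (I : R -> Prop) :
  I 0 -> forall x : R, cozeroI_vertex I x -> cozero_vertex x.
Proof.
move=> I0 x [notIx proper]; split; first by move=> x0; apply: notIx; rewrite x0.
move=> [y xy1]; apply: proper => z; apply: in_principal_plusW => //.
by exists (y * z); rewrite mulrA xy1 mul1r.
Qed.

Lemma cozero_vertex_cozero0 (x : R) :
  cozero_vertex x -> cozeroI_vertex zero_ideal x.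
Proof.
move=> [x_neq0 x_nunit]; split=> // proper.
apply: x_nunit; have [r one_xr] := in_principal_plus0 (proper 1).
by exists r; rewrite -one_xr.
Qed.

Lemma cozeroI_adj_cozero (I : R -> Prop) (I0 : I 0) (x y : cozeroI_graph I) :
  cozeroI_adj x y ->
  cozero_adj (widen_sig (cozeroI_vertex_cozero I0) x)
             (widen_sig (cozeroI_vertex_cozero I0) y).
Proof.
move=> [x_neq_y [x_notin_yI y_notin_xI]]; split; last split.
- by move/widen_sig_inj.
- by move/(in_principal_plusW I0).
- by move/(in_principal_plusW I0).
Qed.

Lemma cozero_adj_cozero0 (x y : cozero_graph R) :
  cozero_adj x y ->
  cozeroI_adj (widen_sig cozero_vertex_cozero0 x)
              (widen_sig cozero_vertex_cozero0 y).
Proof.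
move=> [x_neq_y [x_notin_y y_notin_x]]; split; last split.
- by move/widen_sig_inj.
- by move/in_principal_plus0.
- by move/in_principal_plus0.
Qed.

End CozeroGraphs.

Theorem proposition3p1 (R : comPzRingType) :
  planar (@cozero_adj R) <->
  (forall I : R -> Prop, is_ideal I -> planar (@cozeroI_adj R I)).
Proof.
split=> [planar_G I [I0 _] | planar_GI].
- apply: planar_inj_hom planar_G.
    exact: widen_sig_inj (cozeroI_vertex_cozero I0).
  exact: cozeroI_adj_cozero.
- apply: planar_inj_hom (planar_GI _ (@is_ideal_zero R)).
    exact: widen_sig_inj (@cozero_vertex_cozero0 R).
  exact: cozero_adj_cozero0.
Qed.
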